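(* Let $k\ge 2$, $n=2^k$, and run Jakobsson's pebble-update procedure. Then the pebbles with initial labels $1,\dots,k-1$ are each eventually discarded, and they are discarded in the reverse order of their initial labels: first the pebble with label $k-1$, then the one with label $k-2$, and so on, down to the pebble with label $1$.
   Context: Jakobsson's pebble-update procedure (hash-chain preimage traversal). Fix $k\ge 1$ and $n=2^k$. There are $k$ pebbles, identified by their initial label $j\in\{1,\dots,k\}$; the pebble with label $k$ sits at the seed of the hash chain. Pebble $j$ has two fixed constants $S_j=3\cdot 2^j$ (start increment) and $D_j=2^{j+1}$ (destination increment), and two integer fields $\mathrm{Position}$ and $\mathrm{Destination}$ (which may be set to $+\infty$). Initially $\mathrm{Position}=\mathrm{Destination}=2^j$ for pebble $j$, and a counter $c$ equals $0$. The pebbles are kept sorted by $\mathrm{Position}$, and ''the first pebble'' means the pebble with the smallest $\mathrm{Position}$. One step: (i) if $c=n$, stop; otherwise $c\leftarrow c+1$; (ii) for every pebble with $\mathrm{Position}\ne\mathrm{Destination}$, set $\mathrm{Position}\leftarrow\mathrm{Position}-2$; (iii) if $c$ is even, the first pebble (say with initial label $j$) makes a backward move: $\mathrm{Position}\leftarrow \mathrm{Position}+S_j$, $\mathrm{Destination}\leftarrow\mathrm{Destination}+D_j$; if the new Destination exceeds $n$, both fields are set to $+\infty$ and the pebble is said to be discarded; then the pebbles are re-sorted by $\mathrm{Position}$. (Each pebble also stores a hash-chain value, which does not influence the evolution of the Position and Destination fields.) *)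

From Stdlib Require Import ZArith List Arith.
Import ListNotations.
Open Scope Z_scope.

(* Extended integers: [None] stands for +infinity. *)
Definition xZ := option Z.

Record state := mkState {
  cnt : nat;
  pos : nat -> xZ;          (* Position of the pebble with initial label j *)
  dst : nat -> xZ
}.

Definition xeqb (a b : xZ) : bool :=
  match a, b with
  | Some x, Some y => Z.eqb x y
  | None, None => true
  | _, _ => false
  end.

Definition xltb (a b : xZ) : bool :=
  match a, b with
  | Some x, Some y => Z.ltb x y
  | Some _, None => true
  | None, _ => false
  end.

Definition xadd (a : xZ) (d : Z) : xZ :=
  match a with Some x => Some (x + d) | None => None end.

Definition S_inc (j : nat) : Z := 3 * 2 ^ Z.of_nat j.
Definition D_inc (j : nat) : Z := 2 ^ Z.of_nat (S j).

Definition init (k : nat) : state :=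
  mkState 0%nat (fun j => Some (2 ^ Z.of_nat j)) (fun j => Some (2 ^ Z.of_nat j)).

(* The first pebble: label in 1..k with the smallest Position;
   ties (which never occur among finite positions) broken by smallest label. *)
Definition first_pebble (k : nat) (p : nat -> xZ) : nat :=
  fold_left (fun best j => if xltb (p j) (p best) then j else best)
            (seq 2 (k - 1)) 1%nat.

Definition step (k : nat) (s : state) : state :=
  let n := (2 ^ k)%nat in
  if Nat.eqb (cnt s) n then s else
  let c := S (cnt s) in
  let p1 := fun j => if xeqb (pos s j) (dst s j) then pos s j else xadd (pos s j) (-2) in
  if Nat.even c then
    let j0 := first_pebble k p1 in
    let nd := xadd (dst s j0) (D_inc j0) in
    let exceeds := match nd with Some d => Z.ltb (Z.of_nat n) d | None => true end in
    let np := if exceeds then None else xadd (p1 j0) (S_inc j0) in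
    let nd' := if exceeds then None else nd in
    mkState c (fun j => if Nat.eqb j j0 then np else p1 j)
              (fun j => if Nat.eqb j j0 then nd' else dst s j)
  else mkState c p1 (dst s).

Definition run (k t : nat) : state := Nat.iter t (step k) (init k).

Definition discarded (s : state) (j : nat) : Prop := dst s j = None.

(* The proof rests on a closed form for the whole run.  Write e_j = 2^j.
   At time t <= n = 2^k, pebble j (1 <= j <= k) has
     Destination  dest t j = the odd multiple of e_j in (t, t + 2 e_j],
     Position     posn t j = dest t j + max(0, 2 dest t j - 2 t - 3 e_j),
   unless dest t j > n, in which case both fields are +infinity.
   This invariant ([state_at]) is established by induction on t: at an odd
   counter nobody arrives (destinations are even); at an even counter c the
   2-adic valuation of c singles out the unique pebble j0 whose destination
   is c, it has reached it and so is the first pebble, and its backward move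
   advances its destination to the next odd multiple of e_j0.
   Consequently pebble j < k is discarded exactly from time 2^k - 2^j on,
   which gives the first discard times and their reverse order in the labels. *)

From Stdlib Require Import ZArith List Arith Lia.
Open Scope Z_scope.

Definition pow2 (j : nat) : Z := 2 ^ Z.of_nat j.

Lemma pow2_pos j : 0 < pow2 j.
Proof. unfold pow2. apply Z.pow_pos_nonneg; lia. Qed.

Lemma pow2_S j : pow2 (S j) = 2 * pow2 j.
Proof. unfold pow2. rewrite Nat2Z.inj_succ, Z.pow_succ_r; lia. Qed.

Lemma pow2_nat k : Z.of_nat (2 ^ k) = pow2 k.
Proof. unfold pow2. now rewrite Nat2Z.inj_pow. Qed.

Lemma pow2_le i j : (i <= j)%nat -> pow2 i <= pow2 j.
Proof. intros H. unfold pow2. apply Z.pow_le_mono_r; lia. Qed.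

Lemma pow2_divides i j : (i < j)%nat -> exists w, pow2 j = 2 * pow2 i * w.
Proof.
  intros H. exists (2 ^ Z.of_nat (j - i - 1)).
  unfold pow2. rewrite <- Z.pow_succ_r, <- Z.pow_add_r by lia. f_equal. lia.
Qed.

Lemma two_adic_decomp c : 0 < c -> exists a m, 0 <= m /\ c = pow2 a * (2 * m + 1).
Proof.
  intros Hc. assert (H0 : 0 <= c) by lia. revert Hc. pattern c.
  refine (Zlt_0_ind _ _ c H0). clear c H0. intros c IH _ Hc.
  destruct (Z.even c) eqn:Ev.
  - apply Z.even_spec in Ev as [h Hh].
    destruct (IH h ltac:(lia) ltac:(lia)) as [a [m [Hm Ha]]].
    exists (S a), m. rewrite pow2_S. lia.
  - assert (Od : Z.odd c = true) by (rewrite <- Z.negb_even, Ev; reflexivity).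
    apply Z.odd_spec in Od as [m Hm].
    exists 0%nat, m. change (pow2 0) with 1. lia.
Qed.

(* The closed-form Destination of pebble j at time t: the odd multiple
   of 2^j lying in (t, t + 2^(j+1)]. *)
Definition dest (t : Z) (j : nat) : Z :=
  2 * pow2 j * ((t + pow2 j) / (2 * pow2 j)) + pow2 j.

Definition posn (t : Z) (j : nat) : Z :=
  dest t j + Z.max 0 (2 * dest t j - 2 * t - 3 * pow2 j).

Lemma dest_char t j q :
  2 * pow2 j * q <= t + pow2 j < 2 * pow2 j * q + 2 * pow2 j ->
  dest t j = 2 * pow2 j * q + pow2 j.
Proof.
  intros Hq. pose proof (pow2_pos j). unfold dest.
  rewrite <- (Z.div_unique _ _ q (t + pow2 j - 2 * pow2 j * q)); lia.
Qed.

Lemma dest_spec t j : exists q, dest t j = 2 * pow2 j * q + pow2 j /\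
  2 * pow2 j * q <= t + pow2 j < 2 * pow2 j * q + 2 * pow2 j.
Proof.
  pose proof (pow2_pos j). exists ((t + pow2 j) / (2 * pow2 j)). split; [reflexivity|].
  pose proof (Z.div_mod (t + pow2 j) (2 * pow2 j) ltac:(lia)).
  pose proof (Z.mod_pos_bound (t + pow2 j) (2 * pow2 j) ltac:(lia)). lia.
Qed.

Lemma dest_gt t j : t < dest t j.
Proof. destruct (dest_spec t j) as [q [-> Hq]]. lia. Qed.

Lemma dest_even t j : (1 <= j)%nat -> exists w, dest t j = 2 * w.
Proof.
  intros Hj. destruct (pow2_divides 0 j ltac:(lia)) as [w Hw]. change (pow2 0) with 1 in Hw.
  destruct (dest_spec t j) as [q [-> _]]. exists (pow2 j * q + w). lia.
Qed.

Lemma dest_stay t j : dest t j <> t + 1 -> dest (t + 1) j = dest t j.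
Proof. destruct (dest_spec t j) as [q [Hd Hq]]. intros Hne. rewrite Hd. apply dest_char. lia. Qed.

Lemma dest_jump t j : dest t j = t + 1 -> dest (t + 1) j = dest t j + 2 * pow2 j.
Proof.
  destruct (dest_spec t j) as [q [Hd Hq]]. intros Harr.
  rewrite Hd, (dest_char _ _ (q + 1)); lia.
Qed.

Lemma arrival_exists k c : 0 < c <= pow2 k -> (exists u, c = 2 * u) ->
  exists j, (1 <= j <= k)%nat /\ dest (c - 1) j = c.
Proof.
  intros Hc [u Hu].
  destruct (two_adic_decomp c ltac:(lia)) as [a [m [Hm Ha]]].
  destruct a as [|a]; [change (pow2 0) with 1 in Ha; lia|].
  exists (S a). pose proof (pow2_pos (S a)). split; [split; [lia|]|].
  - destruct (Nat.le_gt_cases (S a) k) as [Hle|Hgt]; [exact Hle|].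
    exfalso. pose proof (pow2_le (S k) (S a) Hgt). rewrite !pow2_S in *.
    pose proof (pow2_pos k). nia.
  - rewrite (dest_char _ _ m); lia.
Qed.

(* No two pebbles arrive at the same time: t + 1 has a unique 2-adic valuation. *)
Lemma arrival_unique t i j : dest t i = t + 1 -> dest t j = t + 1 -> i = j.
Proof.
  assert (Hlt : forall i j, (i < j)%nat -> dest t i = t + 1 -> dest t j = t + 1 -> False).
  { intros i' j' Hij Hi Hj.
    destruct (pow2_divides i' j' Hij) as [w Hw].
    destruct (dest_spec t i') as [qi [Hqi _]]. destruct (dest_spec t j') as [qj [Hqj _]].
    pose proof (pow2_pos i').
    assert (E : pow2 i' * (2 * qi + 1) = pow2 i' * (2 * (w * (2 * qj + 1)))) by nia.
    apply Z.mul_reg_l in E; lia. }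
  intros Hi Hj. destruct (Nat.lt_total i j) as [H|[H|H]]; [exfalso; eauto | exact H | exfalso; eauto].
Qed.

Lemma xltb_asym a b : xltb a b = true -> xltb b a = false.
Proof.
  destruct a, b; simpl; try discriminate; auto.
  intros H. apply Z.ltb_lt in H. apply Z.ltb_ge. lia.
Qed.

Lemma fold_argmin (p : nat -> xZ) j0 l b :
  (b = j0 \/ In j0 l) ->
  (forall x, (x = b \/ In x l) -> x <> j0 -> xltb (p j0) (p x) = true) ->
  fold_left (fun best j => if xltb (p j) (p best) then j else best) l b = j0.
Proof.
  revert b. induction l as [|a l IH]; intros b Hin Hmin; simpl.
  - now destruct Hin as [Hin|[]].
  - apply IH.
    + destruct (Nat.eq_dec a j0) as [->|Ha].
      * destruct (xltb (p j0) (p b)) eqn:Eb; auto.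
        destruct (Nat.eq_dec b j0) as [|Hb]; auto.
        now rewrite (Hmin b (or_introl eq_refl) Hb) in Eb.
      * destruct Hin as [Hb|[Ha'|Hin]]; try congruence.
        -- rewrite Hb in *.
           rewrite (xltb_asym _ _ (Hmin a (or_intror (or_introl eq_refl)) Ha)). now left.
        -- destruct (xltb (p a) (p b)); auto.
    + intros x Hx Hne. destruct Hx as [->|Hx].
      * destruct (xltb (p a) (p b)); apply Hmin; simpl; auto.
      * apply Hmin; simpl; auto.
Qed.

Lemma first_pebble_spec k p j0 : (1 <= j0 <= k)%nat ->
  (forall j, (1 <= j <= k)%nat -> j <> j0 -> xltb (p j0) (p j) = true) ->
  first_pebble k p = j0.
Proof.
  intros Hj0 Hmin. apply fold_argmin.
  - destruct (Nat.eq_dec j0 1); [left; lia | right; apply in_seq; lia].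
  - intros x Hx Hne. apply Hmin; auto.
    destruct Hx as [Hx|Hx]; [lia | apply in_seq in Hx; lia].
Qed.

Definition pebble_at (N t : Z) (j : nat) (px dx : xZ) : Prop :=
  if N <? dest t j then px = None /\ dx = None
  else px = Some (posn t j) /\ dx = Some (dest t j).

Definition state_at (k t : nat) (s : state) : Prop :=
  cnt s = t /\ forall j, (1 <= j <= k)%nat ->
    pebble_at (pow2 k) (Z.of_nat t) j (pos s j) (dst s j).

Definition decr (px dx : xZ) : xZ := if xeqb px dx then px else xadd px (-2).

(* A pebble that does not arrive at time t + 1 is correctly updated by [decr];
   evenness of 2^j keeps the Position above the Destination. *)
Lemma decr_stay N t j px dx : (1 <= j)%nat -> pebble_at N t j px dx ->
  dest t j <> t + 1 -> pebble_at N (t + 1) j (decr px dx) dx.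
Proof.
  intros Hj Hpeb Hne. unfold pebble_at, posn in *. rewrite (dest_stay _ _ Hne).
  destruct (pow2_divides 0 j ltac:(lia)) as [h Hh]. change (pow2 0) with 1 in Hh.
  destruct (N <? dest t j); destruct Hpeb as [-> ->]; unfold decr, xeqb, xadd; auto.
  split; auto. destruct (dest_spec t j) as [q [Hd _]].
  destruct (Z.eqb_spec (dest t j + Z.max 0 (2 * dest t j - 2 * t - 3 * pow2 j)) (dest t j));
    f_equal; nia.
Qed.

Lemma decr_arrive N t j px dx : pebble_at N t j px dx -> dest t j = t + 1 -> t + 1 <= N ->
  decr px dx = Some (t + 1) /\ dx = Some (t + 1).
Proof.
  intros Hpeb Harr HN. unfold pebble_at in Hpeb.
  destruct (Z.ltb_spec N (dest t j)); [lia|]. destruct Hpeb as [-> ->].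
  pose proof (pow2_pos j).
  assert (Hp : posn t j = dest t j) by (unfold posn; lia).
  unfold decr, xeqb. now rewrite Hp, Z.eqb_refl, Harr.
Qed.

(* At an odd counter nobody arrives, so all pebbles are simply decremented. *)
Lemma odd_phase N t j px dx : (1 <= j)%nat -> Nat.even (S t) = false ->
  pebble_at N (Z.of_nat t) j px dx -> pebble_at N (Z.of_nat t + 1) j (decr px dx) dx.
Proof.
  intros Hj Ev Hpeb. apply decr_stay; [exact Hj | exact Hpeb |].
  destruct (dest_even (Z.of_nat t) j Hj) as [w Hw].
  assert (Od : Nat.odd (S t) = true) by (now rewrite <- Nat.negb_even, Ev).
  apply Nat.odd_spec in Od as [u Hu]. lia.
Qed.

Lemma arriving_is_first k t s j0 : Z.of_nat t + 1 <= pow2 k ->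
  (forall j, (1 <= j <= k)%nat -> pebble_at (pow2 k) (Z.of_nat t) j (pos s j) (dst s j)) ->
  (1 <= j0 <= k)%nat -> dest (Z.of_nat t) j0 = Z.of_nat t + 1 ->
  first_pebble k (fun j => decr (pos s j) (dst s j)) = j0.
Proof.
  intros HtN Hs Hj0 Harr. apply first_pebble_spec; auto. intros j Hj Hne.
  rewrite (proj1 (decr_arrive _ _ _ _ _ (Hs j0 Hj0) Harr HtN)).
  assert (Hstay : dest (Z.of_nat t) j <> Z.of_nat t + 1)
    by (intros Hx; apply Hne; eapply arrival_unique; eauto).
  pose proof (decr_stay _ _ _ _ _ (proj1 Hj) (Hs j Hj) Hstay) as Hpeb.
  unfold pebble_at, posn in Hpeb. rewrite (dest_stay _ _ Hstay) in Hpeb.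
  pose proof (dest_gt (Z.of_nat t) j).
  destruct (pow2 k <? dest (Z.of_nat t) j); destruct Hpeb as [-> _]; simpl; auto.
  apply Z.ltb_lt. lia.
Qed.

Lemma backward_move k t j0 : dest (Z.of_nat t) j0 = Z.of_nat t + 1 ->
  let nd := xadd (Some (Z.of_nat t + 1)) (D_inc j0) in
  let exceeds := match nd with Some d => Z.of_nat (2 ^ k) <? d | None => true end in
  pebble_at (pow2 k) (Z.of_nat t + 1) j0
    (if exceeds then None else xadd (Some (Z.of_nat t + 1)) (S_inc j0))
    (if exceeds then None else nd).
Proof.
  intros Harr. cbv zeta. unfold pebble_at, posn, D_inc, S_inc.
  rewrite (dest_jump _ _ Harr), Harr, pow2_nat. fold (pow2 (S j0)) (pow2 j0).
  rewrite pow2_S. cbn [xadd]. pose proof (pow2_pos j0).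
  destruct (pow2 k <? Z.of_nat t + 1 + 2 * pow2 j0); auto.
  split; f_equal; lia.
Qed.

Lemma state_step k t s : (t < 2 ^ k)%nat -> state_at k t s -> state_at k (S t) (step k s).
Proof.
  intros Ht [Hc Hs]. unfold step. rewrite Hc, (proj2 (Nat.eqb_neq t (2 ^ k)) ltac:(lia)).
  cbv zeta.
  change (fun j => if xeqb (pos s j) (dst s j) then pos s j else xadd (pos s j) (-2))
    with (fun j => decr (pos s j) (dst s j)).
  split; [now destruct (Nat.even (S t))|].
  rewrite Nat2Z.inj_succ, <- Z.add_1_r.
  destruct (Nat.even (S t)) eqn:Ev.
  2: { intros j Hj. apply odd_phase; [lia | exact Ev | now apply Hs]. }
  apply Nat.even_spec in Ev as [u Hu].
  assert (HtN : 0 < Z.of_nat t + 1 <= pow2 k) by (rewrite <- pow2_nat; lia).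
  destruct (arrival_exists k (Z.of_nat t + 1) HtN ltac:(exists (Z.of_nat u); lia))
    as [j0 [Hj0 Harr]].
  rewrite Z.add_simpl_r in Harr.
  rewrite (arriving_is_first k t s j0 (proj2 HtN) Hs Hj0 Harr).
  intros j Hj. cbn [pos dst]. destruct (Nat.eqb_spec j j0) as [->|Hne].
  - fold (decr (pos s j0) (dst s j0)).
    destruct (decr_arrive _ _ _ _ _ (Hs j0 Hj0) Harr (proj2 HtN)) as [-> ->].
    now apply backward_move.
  - apply decr_stay; [lia | now apply Hs |].
    intros Hx. apply Hne. eapply arrival_unique; eauto.
Qed.

(* Initially pebble j sits at its destination 2^j, the first odd multiple of 2^j. *)
Lemma state_init k : state_at k 0 (init k).
Proof.
  split; [reflexivity|]. intros j Hj. unfold pebble_at, posn.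
  pose proof (pow2_pos j). pose proof (pow2_le j k (proj2 Hj)).
  change (Z.of_nat 0) with 0.
  rewrite (dest_char _ j 0), Z.mul_0_r, Z.add_0_l by lia.
  destruct (Z.ltb_spec (pow2 k) (pow2 j)); [lia|].
  cbn [init pos dst]. fold (pow2 j). split; f_equal; lia.
Qed.

Lemma state_run k t : (t <= 2 ^ k)%nat -> state_at k t (run k t).
Proof.
  induction t as [|t IH]; intros Ht; [apply state_init | apply state_step, IH; lia].
Qed.

Lemma discarded_iff k t j : (t <= 2 ^ k)%nat -> (1 <= j <= k)%nat ->
  discarded (run k t) j <-> pow2 k < dest (Z.of_nat t) j.
Proof.
  intros Ht Hj. destruct (state_run k t Ht) as [_ Hs]. specialize (Hs j Hj).
  unfold pebble_at, discarded in *.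
  destruct (Z.ltb_spec (pow2 k) (dest (Z.of_nat t) j)); destruct Hs as [_ ->];
    split; intros; auto; try lia; discriminate.
Qed.

Lemma dest_exceeds_iff k j t : (j < k)%nat ->
  pow2 k < dest t j <-> pow2 k - pow2 j <= t.
Proof.
  intros Hjk. destruct (pow2_divides j k Hjk) as [w Hw].
  destruct (dest_spec t j) as [q [Hd Hq]]. rewrite Hd, Hw.
  pose proof (pow2_pos j).
  split; intros Hlt.
  - assert (w <= q) by nia. nia.
  - assert (w <= q) by (destruct (Z.le_gt_cases w q); nia). nia.
Qed.

Close Scope Z_scope.

Theorem fact12 (k : nat) (hk : (2 <= k)%nat) :
  exists T : nat -> nat,
    (forall j : nat, (1 <= j <= k - 1)%nat ->
       (T j <= 2 ^ k)%nat /\ discarded (run k (T j)) j /\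
       (forall t : nat, (t < T j)%nat -> ~ discarded (run k t) j)) /\
    (forall j : nat, (1 <= j)%nat -> (j + 1 <= k - 1)%nat -> (T (j + 1) < T j)%nat).
Proof.
  exists (fun j => 2 ^ k - 2 ^ j). split.
  - intros j Hj.
    assert (Hle : 2 ^ j <= 2 ^ k) by (apply Nat.pow_le_mono_r; lia).
    assert (Hdisc : forall t, t <= 2 ^ k -> discarded (run k t) j <-> 2 ^ k - 2 ^ j <= t).
    { intros t Ht. rewrite discarded_iff, dest_exceeds_iff by lia.
      rewrite <- !pow2_nat. lia. }
    split; [lia | split].
    + apply Hdisc; lia.
    + intros t Ht. rewrite Hdisc; lia.
  - intros j Hj Hjk.
    assert (Hle : 2 ^ (j + 1) <= 2 ^ k) by (apply Nat.pow_le_mono_r; lia).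
    rewrite Nat.pow_add_r in Hle |- *.
    pose proof (Nat.pow_nonzero 2 j ltac:(lia)). simpl in *. lia.
Qed.
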